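(* Let $S=(X,X_0,X_S,U,\rightarrow,Y,H)$ be a metric system with metric $\mathbf{d}$ on $Y$, let $\delta\geq 0$, and let $S_I=(X_I,X_{I0},U,\rightarrow_I)$ be its $\delta$-approximate initial-state estimator. Then for every $(x_0,q_0)\in X_{I0}$ and every finite run $(x_0,q_0)\xrightarrow{u_1}_I (x_1,q_1)\xrightarrow{u_2}_I\cdots\xrightarrow{u_n}_I (x_n,q_n)$ of $S_I$ we have: (i) $x_n\xrightarrow{u_n}x_{n-1}\xrightarrow{u_{n-1}}\cdots\xrightarrow{u_1}x_0$ is a sequence of transitions of $S$; and (ii) $q_n=\{x_0'\in X:\ \exists\, x_0'\xrightarrow{u_n'}x_1'\xrightarrow{u_{n-1}'}\cdots\xrightarrow{u_1'}x_n' \text{ in } S \text{ (for some inputs } u_i'\in U) \text{ with } \max_{i\in\{0,\dots,n\}}\mathbf{d}(H(x_i),H(x_{n-i}'))\leq\delta\}$.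
   Context: A system is a tuple $S=(X,X_0,X_S,U,\rightarrow,Y,H)$ where $X$ is a (possibly infinite) set of states, $X_0\subseteq X$ the initial states, $X_S\subseteq X$ the secret states, $U$ a set of inputs, $\rightarrow\subseteq X\times U\times X$ a transition relation (write $x\xrightarrow{u}x'$ for $(x,u,x')\in\rightarrow$), $Y$ a set of outputs and $H:X\to Y$ an output map. It is metric if $Y$ carries a metric $\mathbf{d}$. For $x\in X$, $u\in U$, $\mathbf{Pre}_u(x)=\{x'': x''\xrightarrow{u}x\}$, and for $q\subseteq X$, $\mathbf{Pre}_u(q)=\bigcup_{x\in q}\mathbf{Pre}_u(x)$. The $\delta$-approximate initial-state estimator of $S$ is $S_I=(X_I,X_{I0},U,\rightarrow_I)$ with $X_{I0}=\{(x,q)\in X\times 2^X: q=\{x'\in X:\mathbf{d}(H(x),H(x'))\leq\delta\}\}$, and for $(x,q),(x',q')\in X\times 2^X$, $u\in U$: $(x,q)\xrightarrow{u}_I(x',q')$ iff $(x',u,x)\in\rightarrow$ and $q'=\bigcup_{\hat u\in U}\mathbf{Pre}_{\hat u}(q)\cap\{x''\in X:\mathbf{d}(H(x'),H(x''))\leq\delta\}$. $X_I\subseteq X\times 2^X$ is the set of states reachable from $X_{I0}$. *)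

From Stdlib Require Import Reals.
Open Scope R_scope.

Definition is_metric {Y : Type} (d : Y -> Y -> R) : Prop :=
  (forall y y', 0 <= d y y') /\
  (forall y y', d y y' = 0 <-> y = y') /\
  (forall y y', d y y' = d y' y) /\
  (forall y y' y'', d y y'' <= d y y' + d y' y'').

Definition Pre {X U : Type} (trans : X -> U -> X -> Prop) (u : U) (q : X -> Prop)
  : X -> Prop :=
  fun x'' => exists x, q x /\ trans x'' u x.

Definition ball_states {X Y : Type} (H : X -> Y) (d : Y -> Y -> R) (delta : R)
  (x : X) : X -> Prop :=
  fun x'' => d (H x) (H x'') <= delta.

Definition est_init {X Y : Type} (H : X -> Y) (d : Y -> Y -> R) (delta : R)
  (x : X) (q : X -> Prop) : Prop :=
  q = ball_states H d delta x.

Definition est_trans {X U Y : Type} (trans : X -> U -> X -> Prop)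
  (H : X -> Y) (d : Y -> Y -> R) (delta : R)
  (x : X) (q : X -> Prop) (u : U) (x' : X) (q' : X -> Prop) : Prop :=
  trans x' u x /\
  q' = (fun x'' => (exists uh : U, Pre trans uh q x'') /\ ball_states H d delta x' x'').

From Stdlib Require Import Reals.
From Stdlib Require Import Lia FunctionalExtensionality PropExtensionality.
Open Scope R_scope.

(* The estimator walks the system backwards: its component [x] follows
   transitions of [S] in reverse, while [q] is pulled back by [Pre] and then cut
   down to the states whose output is [delta]-close to the current one.  Hence
   [q k] consists of the initial states of the [k]-step paths of [S] whose
   outputs stay [delta]-close to those of [x k, ..., x 0]: by induction on [k],
   since such a path of length [k+1] is one transition followed by such a path
   of length [k]. *)

Section ConsistentStates.

Variables (X U Y : Type) (trans : X -> U -> X -> Prop).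
Variables (H : X -> Y) (d : Y -> Y -> R) (delta : R).

Definition consistent_states (x : nat -> X) (k : nat) : X -> Prop :=
  fun x0' : X =>
    exists (x' : nat -> X) (u' : nat -> U),
      x' 0%nat = x0' /\
      (forall i : nat, (i < k)%nat -> trans (x' i) (u' (k - i)%nat) (x' (S i))) /\
      (forall i : nat, (i <= k)%nat -> d (H (x i)) (H (x' (k - i)%nat)) <= delta).

(* [u0] only serves to build the (unused) input sequence of a path of length 0. *)
Lemma consistent_states_0 (u0 : U) (x : nat -> X) :
  consistent_states x 0 = ball_states H d delta (x 0%nat).
Proof.
  apply functional_extensionality; intros z; apply propositional_extensionality.
  unfold consistent_states, ball_states; split.
  - intros [x' [u' [Hx'0 [_ Hclose]]]].
    rewrite <- Hx'0; exact (Hclose 0%nat (le_n 0)).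
  - intros Hz; exists (fun _ => z), (fun _ => u0).
    split; [reflexivity | split; [intros i Hi; lia |]].
    intros i Hi; replace i with 0%nat by lia; exact Hz.
Qed.

Lemma consistent_states_tail (x : nat -> X) (k : nat) (z : X) :
  consistent_states x (S k) z ->
  (exists uh : U, Pre trans uh (consistent_states x k) z) /\
  ball_states H d delta (x (S k)) z.
Proof.
  intros [x' [u' [Hx'0 [Hpath Hclose]]]]; subst z; split.
  - exists (u' (S k)), (x' 1%nat); split.
    + exists (fun j => x' (S j)), u'.
      split; [reflexivity | split].
      * intros i Hi; replace (k - i)%nat with (S k - S i)%nat by lia.
        apply Hpath; lia.
      * intros i Hi; replace (S (k - i)) with (S k - i)%nat by lia.
        apply Hclose; lia.
    + exact (Hpath 0%nat ltac:(lia)).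
  - unfold ball_states.
    replace (x' 0%nat) with (x' (S k - S k)%nat) by (f_equal; lia).
    exact (Hclose (S k) (le_n _)).
Qed.

Lemma consistent_states_cons (x : nat -> X) (k : nat) (z w : X) (uh : U) :
  consistent_states x k w -> trans z uh w ->
  ball_states H d delta (x (S k)) z ->
  consistent_states x (S k) z.
Proof.
  intros [y [u' [Hy0 [Hpath Hclose]]]] Hzw Hz.
  exists (fun j => match j with 0%nat => z | S j => y j end),
         (fun j => if Nat.eq_dec j (S k) then uh else u' j).
  split; [reflexivity | split].
  - intros [|i] Hi.
    + rewrite Nat.sub_0_r, Hy0.
      destruct (Nat.eq_dec (S k) (S k)); [exact Hzw | congruence].
    + replace (S k - S i)%nat with (k - i)%nat by lia.
      destruct (Nat.eq_dec (k - i) (S k)); [lia |].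
      apply Hpath; lia.
  - intros i Hi; destruct (Nat.eq_dec i (S k)) as [-> | Hne].
    + rewrite Nat.sub_diag; exact Hz.
    + replace (S k - i)%nat with (S (k - i)) by lia.
      apply Hclose; lia.
Qed.

Lemma consistent_states_S (x : nat -> X) (k : nat) :
  consistent_states x (S k) =
  (fun z => (exists uh : U, Pre trans uh (consistent_states x k) z) /\
            ball_states H d delta (x (S k)) z).
Proof.
  apply functional_extensionality; intros z; apply propositional_extensionality.
  split; [apply consistent_states_tail |].
  intros [[uh [w [Hw Hzw]]] Hz].
  exact (consistent_states_cons x k z w uh Hw Hzw Hz).
Qed.

Lemma est_run_states (u0 : U) (n : nat) (x : nat -> X) (q : nat -> (X -> Prop))
  (u : nat -> U)
  (Hinit : est_init H d delta (x 0%nat) (q 0%nat))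
  (Hrun : forall i : nat, (i < n)%nat ->
     est_trans trans H d delta (x i) (q i) (u (S i)) (x (S i)) (q (S i))) :
  forall k, (k <= n)%nat -> q k = consistent_states x k.
Proof.
  induction k as [|k IH]; intros Hk.
  - rewrite (consistent_states_0 u0); exact Hinit.
  - destruct (Hrun k ltac:(lia)) as [_ Hq].
    rewrite Hq, consistent_states_S, IH by lia; reflexivity.
Qed.

End ConsistentStates.

(* A run (x_0,q_0) -u_1->_I (x_1,q_1) ... -u_n->_I (x_n,q_n) is encoded by
   x : nat -> X, q : nat -> (X -> Prop), u : nat -> U (only u 1 .. u n used). *)
Theorem mainTheorem1
  (X U Y : Type) (X0 XS : X -> Prop) (trans : X -> U -> X -> Prop)
  (H : X -> Y) (d : Y -> Y -> R) (Hd : is_metric d)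
  (delta : R) (Hdelta : 0 <= delta)
  (n : nat) (x : nat -> X) (q : nat -> (X -> Prop)) (u : nat -> U)
  (Hinit : est_init H d delta (x 0%nat) (q 0%nat))
  (Hrun : forall i : nat, (i < n)%nat ->
     est_trans trans H d delta (x i) (q i) (u (S i)) (x (S i)) (q (S i))) :
  (forall i : nat, (i < n)%nat -> trans (x (S i)) (u (S i)) (x i)) /\
  q n = (fun x0' : X =>
     exists (x' : nat -> X) (u' : nat -> U),
       x' 0%nat = x0' /\
       (forall i : nat, (i < n)%nat -> trans (x' i) (u' (n - i)%nat) (x' (S i))) /\
       (forall i : nat, (i <= n)%nat -> d (H (x i)) (H (x' (n - i)%nat)) <= delta)).
Proof.
  split.
  - intros i Hi; exact (proj1 (Hrun i Hi)).
  - exact (est_run_states X U Y trans H d delta (u 0%nat) n x q u Hinit Hrun n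
             (le_n n)).
Qed.
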